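(* For any $a,b,c,d\in\{0,1,2,3\}$, the set $\{\ket{\psi_{a0}},\ket{\psi_{b1}},\ket{\psi_{c2}},\ket{\psi_{d3}}\}$ of generalized Bell states in $\mathbb{C}^4\otimes\mathbb{C}^4$ can be perfectly discriminated by one-way LOCC using only projective measurements. Similarly, for any $a,b,c,d\in\{0,1,2,3\}$, the set $\{\ket{\psi_{0a}},\ket{\psi_{1b}},\ket{\psi_{2c}},\ket{\psi_{3d}}\}$ can be perfectly discriminated by one-way LOCC using only projective measurements.
   Context: Generalized Bell states in $\mathbb{C}^4\otimes\mathbb{C}^4$ (Alice holds the first factor, Bob the second): $\ket{\psi_{nm}}=\frac12\sum_{j=0}^{3}e^{2\pi i jn/4}\ket{j}_A\ket{j\oplus_4 m}_B$ for $n,m\in\{0,1,2,3\}$, where $j\oplus_4 m=(j+m)\bmod 4$ and $\{\ket{j}\}$ are standard bases. Perfect discrimination by one-way LOCC using only projective measurements means: one party performs a projective measurement on her subsystem, communicates the outcome classically, and the other party then performs a projective measurement (depending on that outcome) whose result identifies with certainty which state of the set was shared. *)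

From HB Require Import structures.
From mathcomp Require Import all_boot all_order all_algebra all_field.
Set Implicit Arguments. Unset Strict Implicit. Unset Printing Implicit Defensive.
Import Order.TTheory GRing.Theory Num.Theory.
Local Open Scope ring_scope.

(* A pure state of C^4 (x) C^4 is represented by its coefficient matrix:
   psi j k = amplitude of |j>_A |k>_B. *)
Definition bistate := 'M[algC]_4.

Definition adjmx (A : 'M[algC]_4) : 'M[algC]_4 := (map_mx Num.conj_op A)^T.

(* (A (x) B) |psi>, in the coefficient-matrix representation. *)
Definition apply_local (A B : 'M[algC]_4) (psi : bistate) : bistate :=
  A *m psi *m B^T.

(* Generalized Bell state psi_{nm} = 1/2 sum_j e^{2 pi i j n/4} |j>|j+m mod 4>,
   with e^{2 pi i jn/4} = 'i^(j n). *)
Definition bell (n m : 'I_4) : bistate :=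
  \matrix_(j < 4, k < 4)
    (if (k : nat) == ((j + m) %% 4)%N then 2^-1 * 'i ^+ (j * n) else 0).

Definition is_PVM (r : nat) (P : 'I_r -> 'M[algC]_4) : Prop :=
  (forall i, adjmx (P i) = P i /\ P i *m P i = P i) /\
  (forall i j, i != j -> P i *m P j = 0) /\
  \sum_(i < r) P i = 1%:M.

(* One-way LOCC perfect discrimination with projective measurements,
   Alice measures first: an outcome (i, j) occurs with nonzero probability on
   state S s iff (P_i (x) Q^i_j) S s <> 0; the guess g i j must then be s. *)
Definition owlocc_AtoB (k : nat) (S : 'I_k -> bistate) : Prop :=
  exists (r t : nat) (P : 'I_r -> 'M[algC]_4) (Q : 'I_r -> 'I_t -> 'M[algC]_4)
         (g : 'I_r -> 'I_t -> 'I_k),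
    is_PVM P /\ (forall i, is_PVM (Q i)) /\
    forall s i j, apply_local (P i) (Q i j) (S s) != 0 -> g i j = s.

Definition owlocc_BtoA (k : nat) (S : 'I_k -> bistate) : Prop :=
  exists (r t : nat) (Q : 'I_r -> 'M[algC]_4) (P : 'I_r -> 'I_t -> 'M[algC]_4)
         (g : 'I_r -> 'I_t -> 'I_k),
    is_PVM Q /\ (forall i, is_PVM (P i)) /\
    forall s i j, apply_local (P i j) (Q i) (S s) != 0 -> g i j = s.

Definition one_way_LOCC_proj (k : nat) (S : 'I_k -> bistate) : Prop :=
  owlocc_AtoB S \/ owlocc_BtoA S.

Definition pick4 (a b c d : 'I_4) (t : 'I_4) : 'I_4 := nth a [:: a; b; c; d] t.

(* The Bell state psi_nm has amplitudes only on |j>|j+m>, so measuring both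
   parties in the computational basis reveals m = j - i.  Applying the inverse
   Fourier transform F^* of Z/4 on both sides turns psi_nm into a state with
   amplitudes only on |u>|v> with u + v = n (orthogonality of the characters
   x |-> i^(xk)), so measuring both parties in the Fourier basis reveals
   n = u + v.  In both protocols Bob's measurement ignores Alice's outcome. *)

From HB Require Import structures.
From mathcomp Require Import all_boot all_order all_algebra all_field.
From mathcomp Require Import ring zify.
Set Implicit Arguments. Unset Strict Implicit. Unset Printing Implicit Defensive.
Import Order.TTheory GRing.Theory Num.Theory.
Local Open Scope ring_scope.

Lemma sum_prim_root_expr (R : idomainType) n (z : R) e : n.-primitive_root z ->
  \sum_(x < n) z ^+ (x * e) = if (n %| e)%N then n%:R else 0.
Proof.
move=> prim_z; under eq_bigr do rewrite mulnC exprM.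
rewrite (prim_order_dvd prim_z); case: eqP => [-> | /eqP ze_neq1].
  by under eq_bigr do rewrite expr1n; rewrite sumr_const card_ord.
have := subrX1 (z ^+ e) n.
rewrite -exprM mulnC exprM (prim_expr_order prim_z) expr1n subrr.
by move/esym/eqP; rewrite mulf_eq0 subr_eq0 (negPf ze_neq1) => /eqP.
Qed.

Lemma prim_root_Ci : 4.-primitive_root ('i : algC).
Proof.
have i4 : 'i ^+ 4 = 1 :> algC by rewrite (exprM _ 2 2) sqrCi sqrrN expr1n.
have i2_neq1 : 'i ^+ 2 != 1 :> algC.
  by rewrite sqrCi eq_sym -subr_eq0 opprK -mulr2n pnatr_eq0.
have [m prim_m] := prim_order_exists (isT : (0 < 4)%N) i4.
rewrite dvdn_divisors // !inE => /or3P[] /eqP m_eq;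
  move: prim_m; rewrite m_eq // => prim_m;
  by rewrite -(prim_order_dvd prim_m) in i2_neq1.
Qed.

Lemma expCi_eqmod4 a b : (a = b %[mod 4])%N -> 'i ^+ a = 'i ^+ b :> algC.
Proof. by move=> ab; apply/eqP; rewrite (eq_prim_root_expr prim_root_Ci) ab. Qed.

Lemma conjC_expCi k : ('i ^+ k)^* = 'i ^+ (3 * k) :> algC.
Proof.
rewrite rmorphXn /= conjCi exprM; congr (_ ^+ _).
by rewrite exprS sqrCi mulrN1.
Qed.

Lemma sum_expCi e : \sum_(x < 4) 'i ^+ (x * e) = if (4 %| e)%N then 4 else 0 :> algC.
Proof. exact: sum_prim_root_expr prim_root_Ci. Qed.

Lemma adjmxM (A B : 'M[algC]_4) : adjmx (A *m B) = adjmx B *m adjmx A.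
Proof. by rewrite /adjmx map_mxM trmx_mul. Qed.

Lemma adjmxK : involutive adjmx.
Proof. by move=> A; apply/matrixP => i j; rewrite !mxE conjCK. Qed.

Lemma adjmx_delta (i j : 'I_4) : adjmx (delta_mx i j) = delta_mx j i.
Proof. by rewrite /adjmx map_delta_mx trmx_delta. Qed.

Lemma adjmx1 : adjmx 1%:M = 1%:M.
Proof. by rewrite /adjmx map_mx1 trmx1. Qed.

Definition unitarymx (U : 'M[algC]_4) : Prop := adjmx U *m U = 1%:M.

Lemma unitarymx1 : unitarymx 1%:M.
Proof. by rewrite /unitarymx adjmx1 mul1mx. Qed.

Definition basis_proj (U : 'M[algC]_4) (i : 'I_4) : 'M[algC]_4 :=
  U *m delta_mx i i *m adjmx U.

Lemma basis_proj_PVM U : unitarymx U -> is_PVM (basis_proj U).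
Proof.
move=> UU; have UUr : U *m adjmx U = 1%:M := mulmx1C UU.
have proj_mul i j :
    basis_proj U i *m basis_proj U j = U *m (delta_mx i i *m delta_mx j j) *m adjmx U.
  by rewrite /basis_proj !mulmxA -(mulmxA _ (adjmx U)) UU mulmx1.
split; [|split].
- move=> i; split; last by rewrite proj_mul mul_delta_mx.
  by rewrite /basis_proj !adjmxM adjmxK adjmx_delta mulmxA.
- by move=> i j ij; rewrite proj_mul mul_delta_mx_0 // mulmx0 mul0mx.
- by rewrite -mulmx_suml -mulmx_sumr -mx1_sum_delta mulmx1 UUr.
Qed.

Lemma apply_localM (A A' B B' : 'M[algC]_4) (M : bistate) :
  apply_local (A *m A') (B *m B') M = apply_local A B (apply_local A' B' M).
Proof. by rewrite /apply_local trmx_mul !mulmxA. Qed.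

Lemma apply_local1 (M : bistate) : apply_local 1%:M 1%:M M = M.
Proof. by rewrite /apply_local trmx1 mul1mx mulmx1. Qed.

Lemma apply_local_delta (i j : 'I_4) (M : bistate) :
  apply_local (delta_mx i i) (delta_mx j j) M = M i j *: delta_mx i j.
Proof.
apply/matrixP => x y; rewrite /apply_local trmx_delta !mxE.
rewrite (bigD1 j) //= big1 => [|k /negbTE kj];
  last by rewrite [delta_mx j j _ _]mxE kj mulr0.
rewrite !mxE (bigD1 i) //= big1 => [|k /negbTE ki];
  last by rewrite [delta_mx i i _ _]mxE ki andbF mul0r.
rewrite !mxE !eqxx !addr0 !andbT.
by case: (x == i) (y == j) => [] []; rewrite ?mul1r ?mulr1 ?mul0r ?mulr0.
Qed.

Lemma apply_local_basis_proj_neq0 U V i j (M : bistate) :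
  apply_local (basis_proj U i) (basis_proj V j) M != 0 ->
  apply_local (adjmx U) (adjmx V) M i j != 0.
Proof.
apply: contraNneq => Mij_eq0.
by rewrite !apply_localM apply_local_delta Mij_eq0 scale0r /apply_local mulmx0 mul0mx.
Qed.

Lemma owlocc_AtoB_bases k (S : 'I_k -> bistate) U V (g : 'I_4 -> 'I_4 -> 'I_k) :
  unitarymx U -> unitarymx V ->
  (forall s i j, apply_local (adjmx U) (adjmx V) (S s) i j != 0 -> g i j = s) ->
  owlocc_AtoB S.
Proof.
move=> UU VV g_ok; exists 4%N, 4%N, (basis_proj U), (fun=> basis_proj V), g.
split; first exact: basis_proj_PVM.
split; first by move=> _; exact: basis_proj_PVM.
by move=> s i j /apply_local_basis_proj_neq0/g_ok.
Qed.

Lemma bellE n m (x k : 'I_4) :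
  bell n m x k = if k == x + m then 2^-1 * 'i ^+ (x * n) else 0.
Proof. by rewrite mxE. Qed.

Lemma bell_neq0 n m (i j : 'I_4) : bell n m i j != 0 -> j = i + m.
Proof. by rewrite bellE; case: ifP => [/eqP | _ /eqP]. Qed.

Lemma mulmx_bellE (A B : 'M[algC]_4) n m u v :
  (A *m bell n m *m B) u v = 2^-1 * \sum_x A u x * 'i ^+ (x * n) * B (x + m) v.
Proof.
rewrite !mxE mulr_sumr; under eq_bigr do rewrite !mxE mulr_suml.
rewrite exchange_big /=; apply: eq_bigr => x _.
rewrite (bigD1 (x + m)) //= big1 => [|k /negbTE k_neq];
  last by rewrite bellE k_neq mulr0 mul0r.
by rewrite bellE eqxx addr0; ring.
Qed.

Definition fourier_mx : 'M[algC]_4 := \matrix_(x < 4, y < 4) (2^-1 * 'i ^+ (x * y)).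

Lemma adjmx_fourierE (x y : 'I_4) :
  adjmx fourier_mx x y = 2^-1 * 'i ^+ (3 * (x * y)).
Proof.
by rewrite !mxE rmorphM /= fmorphV rmorph_nat conjC_expCi [(y * x)%N]mulnC.
Qed.

Lemma unitarymx_fourier : unitarymx fourier_mx.
Proof.
apply/matrixP => u v; rewrite !mxE.
have exp_eq (x : 'I_4) : (3 * (u * x) + x * v = x * (3 * u + v))%N.
  by rewrite [(u * x)%N]mulnC mulnDr mulnCA.
under eq_bigr => x _ do rewrite adjmx_fourierE mxE mulrACA -exprD exp_eq.
rewrite -mulr_sumr sum_expCi.
have -> : (4 %| 3 * u + v)%N = (u == v).
  apply/idP/eqP => [uv|->]; last by rewrite -mulSnr dvdn_mulr.
  by apply: val_inj; move: (ltn_ord u) (ltn_ord v) uv => /=; lia.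
by case: (u == v); [rewrite /=; field | rewrite mulr0].
Qed.

Lemma fourier_bell_neq0 n m u v :
  apply_local (adjmx fourier_mx) (adjmx fourier_mx) (bell n m) u v != 0 -> n = u + v.
Proof.
apply: contraNeq => n_neq; rewrite /apply_local mulmx_bellE.
have term (x : 'I_4) :
    adjmx fourier_mx u x * 'i ^+ (x * n) * (adjmx fourier_mx)^T (x + m) v =
    4^-1 * 'i ^+ (3 * (m * v)) * 'i ^+ (x * (3 * u + n + 3 * v)).
  rewrite [(adjmx _)^T _ _]mxE !adjmx_fourierE -[2^-1 * _ * _]mulrA -exprD mulrACA -exprD.
  rewrite -[RHS]mulrA -exprD.
  congr (_ * _); first by rewrite -invfM -natrM.
  by apply: expCi_eqmod4 => /=; nia.
rewrite (eq_bigr _ (fun x _ => term x)) -mulr_sumr sum_expCi.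
suff /negPf-> : ~~ (4 %| 3 * u + n + 3 * v)%N by rewrite !mulr0.
apply: contra n_neq => dvd4; apply/eqP/val_inj => /=.
by move: (ltn_ord n) (ltn_ord u) (ltn_ord v) dvd4; lia.
Qed.

Theorem theorem2 (a b c d : 'I_4) :
  one_way_LOCC_proj (fun t : 'I_4 => bell (pick4 a b c d t) t) /\
  one_way_LOCC_proj (fun t : 'I_4 => bell t (pick4 a b c d t)).
Proof.
split; left.
  apply: (owlocc_AtoB_bases (g := fun i j => j - i) unitarymx1 unitarymx1).
  by move=> s i j; rewrite adjmx1 apply_local1 => /bell_neq0->; rewrite addrC addKr.
apply: (owlocc_AtoB_bases (g := fun u v => u + v) unitarymx_fourier unitarymx_fourier).
by move=> s u v /fourier_bell_neq0.
Qed.
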